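(* In the setting described in the context, assume the Lie differential operator $\pounds_\xi$ commutes with the contraction operator $S$, i.e. $\pounds_\xi\big(S(dx^i\otimes\partial_j)\big)=S\big(\pounds_\xi(dx^i\otimes\partial_j)\big)$ for all $i,j$ and all vector fields $\xi$. Then $\pounds_\xi dx^i=k^i{}_j(\xi)\,dx^j$ with $$k^i{}_j(\xi)=f_j{}^l\,\partial_l\xi^k\,f^i{}_k+f_j{}^l\,(\partial_kf^i{}_l)\,\xi^k .$$ If moreover $S$ commutes with the covariant differential operator $\nabla$, then $$\pounds_\xi dx^i=\Big[f^i{}_k\,\partial_l\xi^k\,f_j{}^l+\big(P^i_{jk}+f_j{}^l\,\Gamma^m_{lk}\,f^i{}_m\big)\xi^k\Big]dx^j,\qquad \pounds_{\partial_k}dx^i=\big(P^i_{jk}+f_j{}^l\,\Gamma^m_{lk}\,f^i{}_m\big)dx^j .$$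
   Context: $M$ is a smooth $n$-manifold with a covariant differential operator $\nabla$ acting on vector fields via a contravariant affine connection $\Gamma$ ($\nabla_{\partial_j}\partial_i=\Gamma^k_{ij}\partial_k$) and on 1-forms via a covariant affine connection $P$ ($\nabla_{\partial_j}dx^i=P^i_{kj}dx^k$), extended to tensors by the Leibniz rule. A contraction operator $S$ (nondegenerate $C^\infty$-bilinear pairing of vector fields and 1-forms, extended to tensor products) has $S(\partial_j,dx^i)=f^i{}_j$ with $\det(f^i{}_j)\ne0$; $f_j{}^i$ denotes the inverse matrix functions, $f^i{}_kf_j{}^k=\delta^i_j$, $f^k{}_if_k{}^j=\delta^j_i$. The Lie differential operator $\pounds_\xi$ acts on functions by $\pounds_\xi f=\xi f$, on vector fields by $\pounds_\xi u=[\xi,u]$ (so $\pounds_\xi\partial_i=-\partial_i\xi^j\,\partial_j$), is linear and satisfies the Leibniz rule on tensor products, and acts on 1-forms by $\pounds_\xi dx^i=k^i{}_j(\xi)dx^j$ for some functions $k^i{}_j(\xi)$ to be determined. *)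

From HB Require Import structures.
From mathcomp Require Import all_boot all_order all_algebra.
From mathcomp Require Import all_classical all_reals all_analysis.
Set Implicit Arguments. Unset Strict Implicit. Unset Printing Implicit Defensive.
Import Order.TTheory GRing.Theory Num.Theory.
Import numFieldNormedType.Exports.
Local Open Scope classical_set_scope.
Local Open Scope ring_scope.

(* We work in a coordinate chart (x^1..x^n) of M, identified with an open set
   U of R^n = 'rV[R]_n. *)

Definition fn (R : realType) (n : nat) := 'rV[R]_n -> R.
(* vector field X = X^k d_k, stored as k |-> X^k *)
Definition vfield (R : realType) (n : nat) := 'I_n -> fn R n.
(* 1-form w = w_i dx^i, stored as i |-> w_i *)
Definition form1 (R : realType) (n : nat) := 'I_n -> fn R n.
(* tensor T = T_a^b dx^a (x) d_b, stored as (a,b) |-> T_a^b *)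
Definition tens11 (R : realType) (n : nat) := 'I_n -> 'I_n -> fn R n.

Section Coords.
Variables (R : realType) (n : nat).

Definition partial (l : 'I_n) (g : fn R n) : fn R n :=
  fun x => derive g x (delta_mx 0 l : 'rV[R]_n).

Definition smooth_on (U : set 'rV[R]_n) (g : fn R n) : Prop :=
  forall (s : seq 'I_n) (x : 'rV[R]_n), U x -> differentiable (foldr partial g s) x.

Definition smooth_vf (U : set 'rV[R]_n) (X : vfield R n) : Prop :=
  forall k, smooth_on U (X k).

Definition vapp (X : vfield R n) (g : fn R n) : fn R n :=
  fun x => \sum_(k < n) X k x * partial k g x.

Definition dx (i : 'I_n) : form1 R n := fun a _ => if a == i then 1 else 0.
Definition del (j : 'I_n) : vfield R n := fun b _ => if b == j then 1 else 0.

Definition tp (w : form1 R n) (v : vfield R n) : tens11 R n :=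
  fun a b x => w a x * v b x.

(* contraction operator S, C^oo-bilinear with S(d_b, dx^a) = f a b = f^a_b *)
Definition Scontr (f : 'I_n -> 'I_n -> fn R n) (T : tens11 R n) : fn R n :=
  fun x => \sum_(a < n) \sum_(b < n) f a b x * T a b x.

Definition lieV (xi v : vfield R n) : vfield R n :=
  fun j x => vapp xi (v j) x - vapp v (xi j) x.

(* Lie operator on 1-forms, linear with Leibniz rule and
   L_xi dx^i = k xi i j dx^j  (k xi i j = k^i_j(xi)) *)
Definition lie1 (k : vfield R n -> 'I_n -> 'I_n -> fn R n) (xi : vfield R n)
  (w : form1 R n) : form1 R n :=
  fun j x => vapp xi (w j) x + \sum_(i < n) w i x * k xi i j x.

Definition lie_tp (k : vfield R n -> 'I_n -> 'I_n -> fn R n) (xi : vfield R n)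
  (w : form1 R n) (v : vfield R n) : tens11 R n :=
  fun a b x => lie1 k xi w a x * v b x + w a x * lieV xi v b x.

(* covariant differential along X on vector fields:
   nabla_{d_j} d_i = G k i j d_k  (G k i j = Gamma^k_{ij}) *)
Definition nablaV (G : 'I_n -> 'I_n -> 'I_n -> fn R n) (X v : vfield R n)
  : vfield R n :=
  fun c x => vapp X (v c) x + \sum_(i < n) \sum_(j < n) v i x * X j x * G c i j x.

(* covariant differential on 1-forms:
   nabla_{d_j} dx^i = P i a j dx^a  (P i a j = P^i_{aj}) *)
Definition nabla1 (P : 'I_n -> 'I_n -> 'I_n -> fn R n) (X : vfield R n)
  (w : form1 R n) : form1 R n :=
  fun a x => vapp X (w a) x + \sum_(i < n) \sum_(j < n) w i x * X j x * P i a j x.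

Definition nabla_tp (P G : 'I_n -> 'I_n -> 'I_n -> fn R n) (X : vfield R n)
  (w : form1 R n) (v : vfield R n) : tens11 R n :=
  fun a b x => nabla1 P X w a x * v b x + w a x * nablaV G X v b x.

End Coords.

(* Contracting [dx^i (x) d_j] gives [f^i_j], so commuting [L_xi] (resp. [nabla_X])
   with [S] turns the Leibniz rule into the linear system
   [f^a_l k^i_a(xi) = xi f^i_l + f^i_b d_l xi^b] (resp., for [X = d_m],
   [d_m f^i_l = f^a_l P^i_{am} + f^i_b Gamma^b_{lm}]).  The matrix [f] is invertible,
   so the first system determines [k^i_j(xi)]; substituting the second one for the
   derivatives of [f] gives the formula in terms of the connections. *)
From HB Require Import structures.
From mathcomp Require Import all_boot all_order all_algebra.
From mathcomp Require Import all_classical all_reals all_analysis.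
From mathcomp Require Import ring.
Set Implicit Arguments. Unset Strict Implicit. Unset Printing Implicit Defensive.
Import Order.TTheory GRing.Theory Num.Theory.
Import numFieldNormedType.Exports.
Local Open Scope classical_set_scope.
Local Open Scope ring_scope.

Section Kronecker.
Variables (R : comPzRingType) (n : nat).

Lemma sum_delta_mull (i : 'I_n) (F : 'I_n -> R) :
  \sum_(a < n) (if a == i then 1 else 0) * F a = F i.
Proof.
rewrite (bigD1 i) //= eqxx mul1r big1 ?addr0 // => a /negbTE ->.
exact: mul0r.
Qed.

Lemma sum_delta_mulr (i : 'I_n) (F : 'I_n -> R) :
  \sum_(a < n) F a * (if a == i then 1 else 0) = F i.
Proof. by under eq_bigr do rewrite mulrC; exact: sum_delta_mull. Qed.

Lemma sum_inverse_contract (F Fi : 'I_n -> 'I_n -> R) (Y : 'I_n -> R) (c : 'I_n) :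
  (forall a b, \sum_(l < n) F a l * Fi b l = (a == b)%:R) ->
  \sum_(l < n) Fi c l * \sum_(a < n) F a l * Y a = Y c.
Proof.
move=> FFi; under eq_bigr do rewrite mulr_sumr.
rewrite exchange_big /= -[RHS]sum_delta_mulr; apply: eq_bigr => a _.
have -> : (if a == c then 1 else 0) = (a == c)%:R :> R by case: (a == c).
rewrite -FFi mulr_sumr; apply: eq_bigr => l _; ring.
Qed.

End Kronecker.

Section Coordinates.
Variables (R : realType) (n : nat).
Implicit Types (f : 'I_n -> 'I_n -> fn R n) (xi : vfield R n).

Lemma partial_cst (l : 'I_n) (c : R) : partial l (fun _ : 'rV[R]_n => c) = fun _ => 0.
Proof. by apply: funext => x; rewrite /partial derive_cst. Qed.

Lemma smooth_vf_del (U : set 'rV[R]_n) (m : 'I_n) : smooth_vf U (del m).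
Proof.
move=> b s x _; have [d ->] : exists d : R, foldr (@partial R n) (del m b) s = fun _ => d.
  elim: s => [|l s [d IH]]; first by exists (if b == m then 1 else 0).
  by exists 0; rewrite /= IH partial_cst.
exact: differentiable_cst.
Qed.

Lemma vapp_cst xi (c : R) x : vapp xi (fun _ => c) x = 0.
Proof. by rewrite /vapp big1 // => l _; rewrite partial_cst mulr0. Qed.

Lemma vapp_del (m : 'I_n) (g : fn R n) x : vapp (del m) g x = partial m g x.
Proof. exact: sum_delta_mull. Qed.

Lemma lie1_dx k xi (i a : 'I_n) x : lie1 k xi (dx i) a x = k xi i a x.
Proof. by rewrite /lie1 vapp_cst add0r sum_delta_mull. Qed.

Lemma lieV_del xi (j b : 'I_n) x : lieV xi (del j) b x = - partial j (xi b) x.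
Proof. by rewrite /lieV vapp_cst vapp_del sub0r. Qed.

Lemma nabla1_dx (P : 'I_n -> 'I_n -> 'I_n -> fn R n) (m i a : 'I_n) x :
  nabla1 P (del m) (dx i) a x = P i a m x.
Proof.
rewrite /nabla1 vapp_cst add0r.
under eq_bigr do under eq_bigr do rewrite -mulrA.
under eq_bigr do rewrite -mulr_sumr sum_delta_mull.
exact: sum_delta_mull.
Qed.

Lemma nablaV_del (G : 'I_n -> 'I_n -> 'I_n -> fn R n) (m j b : 'I_n) x :
  nablaV G (del m) (del j) b x = G b j m x.
Proof.
rewrite /nablaV vapp_cst add0r.
under eq_bigr do under eq_bigr do rewrite -mulrA.
under eq_bigr do rewrite -mulr_sumr sum_delta_mull.
exact: sum_delta_mull.
Qed.

Lemma Scontr_dx_del f (i j : 'I_n) : Scontr f (tp (dx i) (del j)) = f i j.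
Proof.
apply: funext => x; rewrite /Scontr /tp.
under eq_bigr do under eq_bigr do rewrite mulrA.
under eq_bigr do rewrite sum_delta_mulr mulrC.
exact: sum_delta_mull.
Qed.

Lemma Scontr_leibniz_dx_del f (w : form1 R n) (v : vfield R n) (i j : 'I_n) x :
  Scontr f (fun a b y => w a y * del j b y + dx i a y * v b y) x
  = \sum_(a < n) f a j x * w a x + \sum_(b < n) f i b x * v b x.
Proof.
rewrite /Scontr; under eq_bigr do under eq_bigr do rewrite mulrDr.
under eq_bigr do rewrite big_split /=.
rewrite big_split /=; congr (_ + _).
  by apply: eq_bigr => a _; under eq_bigr do rewrite mulrA; rewrite sum_delta_mulr.
under eq_bigr do under eq_bigr do rewrite mulrCA.
under eq_bigr do rewrite -mulr_sumr.
exact: sum_delta_mull.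
Qed.

Lemma Scontr_lie_tp_dx_del f k xi (i j : 'I_n) x :
  Scontr f (lie_tp k xi (dx i) (del j)) x
  = \sum_(a < n) f a j x * k xi i a x - \sum_(b < n) f i b x * partial j (xi b) x.
Proof.
rewrite (Scontr_leibniz_dx_del f (lie1 k xi (dx i)) (lieV xi (del j))).
under eq_bigr do rewrite lie1_dx.
by under [X in _ + X]eq_bigr do rewrite lieV_del mulrN; rewrite sumrN.
Qed.

Lemma Scontr_nabla_tp_dx_del f (P G : 'I_n -> 'I_n -> 'I_n -> fn R n) (m i j : 'I_n) x :
  Scontr f (nabla_tp P G (del m) (dx i) (del j)) x
  = \sum_(a < n) f a j x * P i a m x + \sum_(b < n) f i b x * G b j m x.
Proof.
rewrite (Scontr_leibniz_dx_del f (nabla1 P (del m) (dx i)) (nablaV G (del m) (del j))).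
by under eq_bigr do rewrite nabla1_dx; under [X in _ + X]eq_bigr do rewrite nablaV_del.
Qed.

Section InverseFrame.
Variables (f finv : 'I_n -> 'I_n -> fn R n) (x : 'rV[R]_n).
Hypothesis f_finv : forall a b, \sum_(l < n) f a l x * finv b l x = (a == b)%:R.

Lemma lie_coeff_of_commute k xi (i j : 'I_n) :
  (forall l, vapp xi (Scontr f (tp (dx i) (del l))) x
             = Scontr f (lie_tp k xi (dx i) (del l)) x) ->
  k xi i j x = \sum_(l < n) \sum_(m < n) finv j l x * partial l (xi m) x * f i m x
             + \sum_(l < n) \sum_(m < n) finv j l x * partial m (f i l) x * xi m x.
Proof.
move=> lie_S.
have system l : \sum_(a < n) f a l x * k xi i a x
                = vapp xi (f i l) x + \sum_(b < n) f i b x * partial l (xi b) x.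
  by have := lie_S l; rewrite Scontr_dx_del Scontr_lie_tp_dx_del => ->; rewrite subrK.
transitivity (\sum_(l < n) finv j l x * \sum_(a < n) f a l x * k xi i a x).
  by rewrite (sum_inverse_contract (fun a => k xi i a x) j f_finv).
under eq_bigr do rewrite system mulrDr.
rewrite big_split addrC /vapp; congr (_ + _); apply: eq_bigr => l _.
all: by rewrite mulr_sumr; apply: eq_bigr => m _; ring.
Qed.

Definition lie_del_coeff (P G : 'I_n -> 'I_n -> 'I_n -> fn R n) (m i j : 'I_n) : R :=
  P i j m x + \sum_(l < n) \sum_(p < n) finv j l x * G p l m x * f i p x.

Lemma sum_finv_partial_f (P G : 'I_n -> 'I_n -> 'I_n -> fn R n) (m i j : 'I_n) :
  (forall l, vapp (del m) (Scontr f (tp (dx i) (del l))) x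
             = Scontr f (nabla_tp P G (del m) (dx i) (del l)) x) ->
  \sum_(l < n) finv j l x * partial m (f i l) x = lie_del_coeff P G m i j.
Proof.
move=> nabla_S.
have partial_f l : partial m (f i l) x
    = \sum_(a < n) f a l x * P i a m x + \sum_(b < n) f i b x * G b l m x.
  by rewrite -vapp_del -(Scontr_dx_del f i l) nabla_S Scontr_nabla_tp_dx_del.
under eq_bigr do rewrite partial_f mulrDr.
rewrite big_split /=; congr (_ + _).
  exact: sum_inverse_contract (fun a => P i a m x) j f_finv.
apply: eq_bigr => l _; rewrite mulr_sumr; apply: eq_bigr => p _; ring.
Qed.

Lemma lie_coeff_of_commute_nabla k xi (P G : 'I_n -> 'I_n -> 'I_n -> fn R n) (i j : 'I_n) :
  (forall l, vapp xi (Scontr f (tp (dx i) (del l))) x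
             = Scontr f (lie_tp k xi (dx i) (del l)) x) ->
  (forall m l, vapp (del m) (Scontr f (tp (dx i) (del l))) x
               = Scontr f (nabla_tp P G (del m) (dx i) (del l)) x) ->
  k xi i j x = \sum_(m < n) \sum_(l < n) f i m x * partial l (xi m) x * finv j l x
             + \sum_(m < n) lie_del_coeff P G m i j * xi m x.
Proof.
move=> lie_S nabla_S; rewrite (lie_coeff_of_commute j lie_S) exchange_big /=.
congr (_ + _); first by apply: eq_bigr => m _; apply: eq_bigr => l _; ring.
rewrite exchange_big; apply: eq_bigr => m _ /=.
by rewrite -(sum_finv_partial_f j (nabla_S m)) mulr_suml; apply: eq_bigr => l _; ring.
Qed.

Lemma lie_coeff_del k (P G : 'I_n -> 'I_n -> 'I_n -> fn R n) (m i j : 'I_n) :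
  (forall l, vapp (del m) (Scontr f (tp (dx i) (del l))) x
             = Scontr f (lie_tp k (del m) (dx i) (del l)) x) ->
  (forall m' l, vapp (del m') (Scontr f (tp (dx i) (del l))) x
                = Scontr f (nabla_tp P G (del m') (dx i) (del l)) x) ->
  k (del m) i j x = lie_del_coeff P G m i j.
Proof.
move=> lie_S nabla_S; rewrite (lie_coeff_of_commute_nabla j lie_S nabla_S).
rewrite big1 ?add0r => [|m' _]; first exact: sum_delta_mulr.
by apply: big1 => l _; rewrite partial_cst mulr0 mul0r.
Qed.

End InverseFrame.

End Coordinates.

Theorem mainTheorem5 (R : realType) (n : nat) (U : set 'rV[R]_n)
  (G P : 'I_n -> 'I_n -> 'I_n -> fn R n)
  (f finv : 'I_n -> 'I_n -> fn R n)
  (k : vfield R n -> 'I_n -> 'I_n -> fn R n) :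
  open U ->
  (forall a b c, smooth_on U (G a b c)) ->
  (forall a b c, smooth_on U (P a b c)) ->
  (forall a b, smooth_on U (f a b)) ->
  (forall a b, smooth_on U (finv a b)) ->
  (forall x, U x -> \det (\matrix_(i, j) f i j x) != 0) ->
  (forall i j x, U x -> \sum_(l < n) f i l x * finv j l x = (i == j)%:R) ->
  (forall i j x, U x -> \sum_(l < n) f l i x * finv l j x = (i == j)%:R) ->
  (forall xi, smooth_vf U xi -> forall i j x, U x ->
     vapp xi (Scontr f (tp (dx i) (del j))) x
     = Scontr f (lie_tp k xi (dx i) (del j)) x) ->
  (forall xi, smooth_vf U xi -> forall i j x, U x ->
     k xi i j x = \sum_(l < n) \sum_(m < n) finv j l x * partial l (xi m) x * f i m x
                + \sum_(l < n) \sum_(m < n) finv j l x * partial m (f i l) x * xi m x)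
  /\
  ((forall X, smooth_vf U X -> forall i j x, U x ->
      vapp X (Scontr f (tp (dx i) (del j))) x
      = Scontr f (nabla_tp P G X (dx i) (del j)) x) ->
   (forall xi, smooth_vf U xi -> forall i j x, U x ->
      k xi i j x = \sum_(m < n) \sum_(l < n) f i m x * partial l (xi m) x * finv j l x
                 + \sum_(m < n) (P i j m x
                      + \sum_(l < n) \sum_(p < n) finv j l x * G p l m x * f i p x) * xi m x)
   /\
   (forall m i j x, U x ->
      k (del m) i j x = P i j m x
                      + \sum_(l < n) \sum_(p < n) finv j l x * G p l m x * f i p x)).
Proof.
(* Pointwise linear algebra: only [f f^-1 = 1] and the smoothness of the [d_m] are used. *)
move=> _ _ _ _ _ _ f_finv _ lie_S.
have inv x (Ux : U x) a b := f_finv a b x Ux.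
split=> [xi xi_smooth i j x Ux | nabla_S].
  exact: (lie_coeff_of_commute (inv x Ux) j (fun l => lie_S xi xi_smooth i l x Ux)).
have nabla_del x (Ux : U x) (i m l : 'I_n) := nabla_S (del m) (smooth_vf_del m) i l x Ux.
split=> [xi xi_smooth i j x Ux | m i j x Ux].
  exact: (lie_coeff_of_commute_nabla (inv x Ux) j
    (fun l => lie_S xi xi_smooth i l x Ux) (nabla_del x Ux i)).
by rewrite (lie_coeff_del (inv x Ux) j
  (fun l => lie_S (del m) (smooth_vf_del m) i l x Ux) (nabla_del x Ux i)).
Qed.
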